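(* Let $\mathcal{E}=(\mathbf{R},\mathbf{S},\Sigma_{st},\mathbf{F})$ be a constructive relational to RDF data exchange setting. For any instance $I$ of $\mathbf{R}$, if the core pre-solution for $I$ to $\mathcal{E}$ is not node kind consistent, then $I$ does not admit a solution to $\mathcal{E}$.
   Context: Values: $\mathsf{Iri}$ (IRIs, containing predicates $\mathsf{Pred}$), $\mathsf{NullIri}$, $\mathsf{Lit}$ with null literals $\mathsf{NullLit}\subseteq\mathsf{Lit}$; non-null values are constants. $\mathbf{R}=(\mathcal{R},\Sigma_{fd})$: relation names with arities and functional dependencies; an instance assigns finite sets of tuples of non-null literals to relation names. A typed graph: finite set of facts $\mathit{Triple}(s,p,o)$ ($s\in\mathsf{Iri}\cup\mathsf{NullIri}$, $p\in\mathsf{Pred}$, $o\in\mathsf{Iri}\cup\mathsf{NullIri}\cup\mathsf{Lit}$) plus type facts $T(n)$ ($T\in\mathcal{T}$) and $\mathit{Literal}(n)$; literal nodes may only have type $\mathit{Literal}$, non-literal nodes only types in $\mathcal{T}$; $\mathit{types}_G(n)=\{T\mid T(n)\in G\}$. Deterministic shape schema $\mathbf{S}=(\mathcal{T},\delta)$, $\delta:\mathcal{T}\times\mathsf{Pred}\rightharpoonup(\mathcal{T}\cup\{\mathit{Literal}\})\times\{1,?,*,+\}$, $\delta(T,p)=S^\mu$; satisfaction: for each $\delta(T,p)=S^\mu$, every $p$-successor of a $T$-typed node has type $S$; at most one $p$-successor if $\mu\in\{1,?\}$; at least one if $\mu\in\{1,+\}$. Constructive: IRI constructors $f\in\mathcal{F}$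 interpreted as $f^F:\mathsf{Lit}^n\to\mathsf{Iri}$ (constants) with pairwise disjoint ranges, st-tgds full of the form $\forall\bar x.\,\varphi\Rightarrow\psi$, $\varphi$ conjunction of atoms over $\mathcal{R}$, $\psi$ conjunction of atoms $\mathit{Triple}(t_1,p,t_2)$, $T(t)$, $\mathit{Literal}(t)$ with terms variables or $f(\bar u)$. A solution for $I$: a typed graph satisfying $\mathbf{S}$ such that $I$ together with it satisfies $\Sigma_{st}$. The core pre-solution $J_0$: least set of facts containing the evaluated heads of all st-tgds triggered in $I$ and closed under $T(a),\mathit{Triple}(a,p,b)\in J_0,\ \delta(T,p)=S^\mu\Rightarrow S(b)\in J_0$. $\mathit{CoTypes}(J)$ is the set of all $X\subseteq\mathcal{T}\cup\{\mathit{Literal}\}$ such that every solution $G\supseteq J$ has a node $n$ with $X=\mathit{types}_G(n)$; $J_0$ is node kind consistent if $\mathit{CoTypes}(J_0)$ contains no $X$ with $\{\mathit{Literal},T\}\subseteq X$ for some $T\in\mathcal{T}$. *)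

From Stdlib Require Import List.
Import ListNotations.
Set Implicit Arguments.

Record universe := Universe {
  Iri : Type;
  NullIri : Type;
  Lit : Type;
  isPred : Iri -> Prop;        (* Pred ⊆ Iri *)
  isNullLit : Lit -> Prop      (* NullLit ⊆ Lit *)
}.

Section Setting.
Variable U : universe.

Inductive value : Type :=
| VIri (i : Iri U)
| VNullIri (n : NullIri U)
| VLit (l : Lit U).

Definition is_literal (v : value) : Prop :=
  match v with VLit _ => True | _ => False end.

Definition is_constant (v : value) : Prop :=
  match v with
  | VIri _ => True
  | VNullIri _ => False
  | VLit l => ~ isNullLit U l
  end.

Inductive tlabel (TName : Type) : Type :=
| LitType
| ShType (T : TName).
Arguments LitType {TName}.

Inductive mult : Type := MOne | MOpt | MStar | MPlus.

Inductive fact (TName : Type) : Type :=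
| Triple (s : value) (p : Iri U) (o : value)
| TypeFact (l : tlabel TName) (n : value).
Arguments Triple {TName}.
Arguments TypeFact {TName}.

Definition typed_graph_wf {TName : Type} (G : list (fact TName)) : Prop :=
  forall f, In f G ->
    match f with
    | Triple s p o => ~ is_literal s /\ isPred U p
    | TypeFact LitType n => is_literal n
    | TypeFact (ShType _) n => ~ is_literal n
    end.

Definition is_node {TName : Type} (G : list (fact TName)) (n : value) : Prop :=
  exists f, In f G /\
    match f with
    | Triple s _ o => n = s \/ n = o
    | TypeFact _ m => n = m
    end.

Record fd (RName : Type) := FD {
  fd_rel : RName;
  fd_lhs : list nat;   (* attribute positions *)
  fd_rhs : list nat
}.

Definition var := nat.

Inductive term (FName : Type) : Type :=
| TVar (x : var)
| TFun (f : FName) (us : list var).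
Arguments TVar {FName}.

Record body_atom (RName : Type) := BAtom {
  ba_rel : RName;
  ba_args : list var
}.

Inductive head_atom (TName FName : Type) : Type :=
| HTriple (t1 : term FName) (p : Iri U) (t2 : term FName)
| HType (T : TName) (t : term FName)
| HLiteral (t : term FName).
Arguments HTriple {TName FName}.
Arguments HType {TName FName}.
Arguments HLiteral {TName FName}.

Record sttgd (RName TName FName : Type) := STTgd {
  tgd_body : list (body_atom RName);
  tgd_head : list (head_atom TName FName)
}.

Definition term_vars {FName} (t : term FName) : list var :=
  match t with TVar x => [x] | TFun _ us => us end.

Definition head_atom_vars {TName FName} (a : head_atom TName FName) : list var :=
  match a with
  | HTriple t1 _ t2 => term_vars t1 ++ term_vars t2
  | HType _ t => term_vars t
  | HLiteral t => term_vars t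
  end.

Record setting := Setting {
  (* relational schema R = (𝓡, Σ_fd) *)
  RName : Type;
  rarity : RName -> nat;
  sigma_fd : list (fd RName);
  (* deterministic shape schema S = (𝒯, δ) *)
  TName : Type;
  delta : TName -> Iri U -> option (tlabel TName * mult);
  delta_pred : forall T p S, delta T p = Some S -> isPred U p;
  (* IRI constructors F with interpretation *)
  FName : Type;
  farity : FName -> nat;
  fint : FName -> list (Lit U) -> Iri U;
  fint_disjoint : forall f g us vs,
    length us = farity f -> length vs = farity g -> f <> g ->
    fint f us <> fint g vs;
  (* st-tgds Σ_st (full) *)
  sigma_st : list (sttgd RName TName FName);
  sigma_st_wf : forall tg, In tg sigma_st ->
    (forall b, In b (tgd_body tg) -> length (ba_args b) = rarity (ba_rel b)) /\
    (forall h, In h (tgd_head tg) ->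
       (match h with
        | HTriple t1 p t2 =>
            isPred U p /\
            (forall f us, (t1 = TFun f us \/ t2 = TFun f us) -> length us = farity f)
        | HType _ t | HLiteral t =>
            forall f us, t = TFun f us -> length us = farity f
        end) /\
       (forall x, In x (head_atom_vars h) ->
          exists b, In b (tgd_body tg) /\ In x (ba_args b)))
}.

Variable E : setting.

Notation gfact := (fact (TName E)).

Definition fd_holds (rel : RName E -> list (list (Lit U))) (d : fd (RName E)) : Prop :=
  forall t1 t2, In t1 (rel (fd_rel d)) -> In t2 (rel (fd_rel d)) ->
    (forall i, In i (fd_lhs d) -> nth_error t1 i = nth_error t2 i) ->
    (forall j, In j (fd_rhs d) -> nth_error t1 j = nth_error t2 j).

Record instance := Instance {
  rel : RName E -> list (list (Lit U));
  rel_wf : forall R t, In t (rel R) ->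
    length t = rarity E R /\ (forall l, In l t -> ~ isNullLit U l);
  rel_fd : forall d, In d (sigma_fd E) -> fd_holds rel d
}.

Definition eval_term (nu : var -> Lit U) (t : term (FName E)) : value :=
  match t with
  | TVar x => VLit (nu x)
  | TFun f us => VIri (fint E f (map nu us))
  end.

Definition eval_head (nu : var -> Lit U) (h : head_atom (TName E) (FName E)) : gfact :=
  match h with
  | HTriple t1 p t2 => Triple (eval_term nu t1) p (eval_term nu t2)
  | HType T t => TypeFact (ShType T) (eval_term nu t)
  | HLiteral t => TypeFact LitType (eval_term nu t)
  end.

Definition body_holds (I : instance) (nu : var -> Lit U)
    (tg : sttgd (RName E) (TName E) (FName E)) : Prop :=
  forall b, In b (tgd_body tg) -> In (map nu (ba_args b)) (rel I (ba_rel b)).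

Definition sttgds_satisfied (I : instance) (G : list gfact) : Prop :=
  forall tg, In tg (sigma_st E) -> forall nu, body_holds I nu tg ->
    forall h, In h (tgd_head tg) -> In (eval_head nu h) G.

Definition satisfies_schema (G : list gfact) : Prop :=
  forall T p S mu, delta E T p = Some (S, mu) ->
    forall a, In (TypeFact (ShType T) a) G ->
      (forall b, In (Triple a p b) G -> In (TypeFact S b) G) /\
      ((mu = MOne \/ mu = MOpt) ->
         forall b b', In (Triple a p b) G -> In (Triple a p b') G -> b = b') /\
      ((mu = MOne \/ mu = MPlus) -> exists b, In (Triple a p b) G).

Definition solution (I : instance) (G : list gfact) : Prop :=
  typed_graph_wf G /\ satisfies_schema G /\ sttgds_satisfied I G.

(** * Core pre-solution J0 (least set, as an inductive predicate) *)
Inductive core_pre_solution (I : instance) : gfact -> Prop :=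
| cps_head : forall tg nu h,
    In tg (sigma_st E) -> body_holds I nu tg -> In h (tgd_head tg) ->
    core_pre_solution I (eval_head nu h)
| cps_close : forall T a p b S mu,
    core_pre_solution I (TypeFact (ShType T) a) ->
    core_pre_solution I (Triple a p b) ->
    delta E T p = Some (S, mu) ->
    core_pre_solution I (TypeFact S b).

Definition types_of (G : list gfact) (n : value) : tlabel (TName E) -> Prop :=
  fun l => In (TypeFact l n) G.

Definition CoTypes (I : instance) (J : gfact -> Prop) (X : tlabel (TName E) -> Prop) : Prop :=
  forall G, solution I G -> (forall f, J f -> In f G) ->
    exists n, is_node G n /\ (forall l, X l <-> types_of G n l).

Definition node_kind_consistent (I : instance) (J : gfact -> Prop) : Prop :=
  ~ exists X, CoTypes I J X /\ X LitType /\ exists T, X (ShType T).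

End Setting.

From Stdlib Require Import List.
Set Implicit Arguments.

(* Every solution contains the core pre-solution: it contains the heads of all
   triggered st-tgds and is closed under the typing rule of the schema.  Every
   node of a well-formed typed graph is either a literal or not, so it cannot
   carry both Literal and a shape type; hence no type set mixing the two is
   forced on all solutions as soon as one solution exists. *)

Lemma typed_graph_wf_not_literal_and_shape (U : universe) (TN : Type)
    (G : list (fact U TN)) (n : value U) (T : TN) :
  typed_graph_wf G -> In (TypeFact (LitType _) n) G -> ~ In (TypeFact (ShType T) n) G.
Proof.
  intros Hwf Hlit Hshape.
  exact (Hwf _ Hshape (Hwf _ Hlit)).
Qed.

Section NodeKind.

Variable U : universe.
Variable E : setting U.

Lemma core_pre_solution_incl (I : instance E) (G : list (fact U (TName E))) :
  satisfies_schema E G -> sttgds_satisfied I G ->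
  forall f, core_pre_solution I f -> In f G.
Proof.
  intros Hschema Htgds f Hf.
  induction Hf as [tg nu h Htg Hbody Hh | T a p b S mu _ IHa _ IHab Hdelta].
  - exact (Htgds tg Htg nu Hbody h Hh).
  - exact (proj1 (Hschema T p S mu Hdelta a IHa) b IHab).
Qed.

Lemma solution_node_kind_consistent (I : instance E) (J : fact U (TName E) -> Prop)
    (G : list (fact U (TName E))) :
  solution I G -> (forall f, J f -> In f G) -> node_kind_consistent I J.
Proof.
  intros Hsol HJ [X [HX [Hlit [T Hshape]]]].
  destruct (HX G Hsol HJ) as [n [_ Htypes]].
  apply (typed_graph_wf_not_literal_and_shape n T (proj1 Hsol)).
  - exact (proj1 (Htypes _) Hlit).
  - exact (proj1 (Htypes _) Hshape).
Qed.

End NodeKind.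

Theorem lemma2 (U : universe) (E : setting U) (I : instance E) :
  ~ node_kind_consistent I (core_pre_solution I) ->
  ~ exists G, solution I G.
Proof.
  intros Hinconsistent [G Hsol].
  apply Hinconsistent, (solution_node_kind_consistent Hsol).
  destruct Hsol as [_ [Hschema Htgds]].
  exact (core_pre_solution_incl Hschema Htgds).
Qed.
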